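(* Let $(a_n)_{n\ge1}$ be a real sequence with $|a_n|\le1$, and let $N_1<N_2<\cdots$ be integers with $\lim_{j\to\infty}\frac1{N_j}\sum_{n=1}^{N_j}|a_n|=\theta>0$. Then there exist a subsequence $(N_{j_t})_{t\ge1}$ and a point $x\in X$ such that for all sufficiently large $t$, $$\frac1{N_{j_t}}\sum_{n=1}^{N_{j_t}}f(\hat T^nx)\,a(n)\ \ge\ \theta\,\tau(N_{j_t}).$$ In particular $\limsup_{N\to\infty}\frac{\frac1N\sum_{n=1}^Nf(\hat T^nx)a(n)}{\tau(N)}>0$.
   Context: Let $\tau:\mathbb N\to(0,\infty)$ be non-increasing with $\tau(n)\to0$. Fix integers $2\le q_1<q_2<\cdots$ such that for every $k\ge1$: (i) $q_{k+1}>q_k^4+3q_k$; (ii) $\tau(\lceil q_{k+1}/3\rceil)<\frac1{16q_k}$. For $k\ge1$ put $q^{(0)}_k=q_{2k}$, $q^{(1)}_k=q_{2k+1}$, $q^{(2)}_k=q^{(0)}_k-1$, $q^{(3)}_k=q^{(1)}_k-1$, and $L^{(i)}_k=\lfloor q^{(i)}_{k+1}/(3q^{(i)}_k)\rfloor$. Let $s^{(i)}_k\in\{-1,0,1\}^{\mathbb N}$ (indices $n\ge1$) be given by $s^{(i)}_k(n)=1$ if $n=jq^{(i)}_k$ with $1\le j\le L^{(i)}_k$, $s^{(i)}_k(n)=-1$ if $n=jq^{(i)}_k$ with $L^{(i)}_k<j\le2L^{(i)}_k$, and $s^{(i)}_k(n)=0$ otherwise. For $w\in\{-1,0,1\}^{\mathbb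 N}$ and $p\in\mathbb N_0$ let $\sigma^{-p}w$ be defined by $(\sigma^{-p}w)(n)=0$ for $1\le n\le p$ and $(\sigma^{-p}w)(n)=w(n-p)$ for $n>p$. For $l\le m$ write $w|_l^m=(w_l,\dots,w_m)$. Let $R^{(i)}_k=\{(\sigma^{-p}s^{(i)}_k)|_{q^{(i)}_k}^{q^{(i)}_{k+1}-1}:p=0,1,\dots,q^{(i)}_k\}$ and $P^{(i)}=\{y\in\{-1,0,1\}^{\mathbb N}: y(n)=0\text{ for }1\le n<q^{(i)}_1,\ y|_{q^{(i)}_k}^{q^{(i)}_{k+1}-1}\in R^{(i)}_k\text{ for all }k\ge1\}$. Let $Z=\{-1,0,1\}^{\mathbb N}\times\{-1,0,1\}^{\mathbb Z}$, where each factor carries the metric $d(u,v)=3^{-\min\{|m|:u_m\neq v_m\}}$ and $Z$ the maximum of the two. $\sigma$ is the left shift $(\sigma u)_m=u_{m+1}$ (invertible on $\{-1,0,1\}^{\mathbb Z}$). Define $T:Z\to Z$, $T(y,z)=(\sigma y,\sigma^{y_1}z)$, and $X_i=\overline{\bigcup_{n\ge0}T^n(P^{(i)}\times\{-1,0,1\}^{\mathbb Z})}$ for $i\in\{0,1,2,3\}$. Let $X=X_0\times X_1\times X_2\times X_3\times\{0,1,2,3\}$ with $\hat T(p^{(0)},p^{(1)},p^{(2)},p^{(3)},i)=(Tp^{(0)},Tp^{(1)},Tp^{(2)},Tp^{(3)},i)$, and $f\in\mathcal C(X)$, $f((y^{(0)},z^{(0)}),(y^{(1)},z^{(1)}),(y^{(2)},z^{(2)}),(y^{(3)},z^{(3)}),i)=z^{(i)}_0$.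 *)

From Stdlib Require Import Reals ZArith Lia Bool.

Definition trit (v : Z) : Prop := v = (-1)%Z \/ v = 0%Z \/ v = 1%Z.

(* A point of Z = {-1,0,1}^N x {-1,0,1}^Z.  The first component is a
   function nat -> Z of which only the indices n >= 1 are meaningful
   (index 0 is ignored everywhere: by the shift T, by f, and by the topology). *)
Definition Zpt : Type := ((nat -> Z) * (Z -> Z))%type.

Definition Tmap (u : Zpt) : Zpt :=
  (fun n => fst u (S n), fun m => snd u (m + fst u 1%nat)%Z).

Definition qq (q : nat -> nat) (i k : nat) : nat :=
  match i with
  | 0 => q (2 * k)%nat
  | 1 => q (2 * k + 1)%nat
  | 2 => (q (2 * k) - 1)%nat
  | _ => (q (2 * k + 1) - 1)%nat
  end.

Definition LL (q : nat -> nat) (i k : nat) : nat :=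
  (qq q i (S k) / (3 * qq q i k))%nat.

Definition sseq (q : nat -> nat) (i k : nat) (n : nat) : Z :=
  let Q := qq q i k in
  if (1 <=? n)%nat && (n mod Q =? 0)%nat then
    let j := (n / Q)%nat in
    if (1 <=? j)%nat && (j <=? LL q i k)%nat then 1%Z
    else if (LL q i k <? j)%nat && (j <=? 2 * LL q i k)%nat then (-1)%Z
    else 0%Z
  else 0%Z.

Definition shiftR (p : nat) (w : nat -> Z) (n : nat) : Z :=
  if (n <=? p)%nat then 0%Z else w (n - p)%nat.

Definition inR (q : nat -> nat) (i k : nat) (y : nat -> Z) : Prop :=
  exists p : nat, (p <= qq q i k)%nat /\
    forall n : nat, (qq q i k <= n <= qq q i (S k) - 1)%nat ->
      y n = shiftR p (sseq q i k) n.

Definition Pset (q : nat -> nat) (i : nat) (y : nat -> Z) : Prop :=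
  (forall n : nat, (1 <= n)%nat -> trit (y n)) /\
  (forall n : nat, (1 <= n < qq q i 1)%nat -> y n = 0%Z) /\
  (forall k : nat, (1 <= k)%nat -> inR q i k y).

Definition orbitSet (q : nat -> nat) (i : nat) (u : Zpt) : Prop :=
  exists (n : nat) (y : nat -> Z) (z : Z -> Z),
    Pset q i y /\ (forall m : Z, trit (z m)) /\ u = Nat.iter n Tmap (y, z).

(* Closure in Z for the metric max(d,d), d(u,v) = 3^{-min{|m| : u_m <> v_m}}:
   u is in the closure of S iff for every m there is s in S with
   d(u,s) < 3^{-m}, i.e. s agrees with u at all indices of absolute value <= m
   (indices n >= 1 for the first factor). *)
Definition closureZ (S : Zpt -> Prop) (u : Zpt) : Prop :=
  forall m : nat, exists s : Zpt, S s /\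
    (forall n : nat, (1 <= n <= m)%nat -> fst u n = fst s n) /\
    (forall k : Z, (Z.abs k <= Z.of_nat m)%Z -> snd u k = snd s k).

Definition Xi (q : nat -> nat) (i : nat) : Zpt -> Prop := closureZ (orbitSet q i).

Definition Xpt : Type := (Zpt * Zpt * Zpt * Zpt * nat)%type.

Definition inX (q : nat -> nat) (x : Xpt) : Prop :=
  let '(p0, p1, p2, p3, i) := x in
  Xi q 0 p0 /\ Xi q 1 p1 /\ Xi q 2 p2 /\ Xi q 3 p3 /\ (i <= 3)%nat.

Definition That (x : Xpt) : Xpt :=
  let '(p0, p1, p2, p3, i) := x in (Tmap p0, Tmap p1, Tmap p2, Tmap p3, i).

Definition fX (x : Xpt) : R :=
  let '(p0, p1, p2, p3, i) := x in
  IZR (snd (match i with 0 => p0 | 1 => p1 | 2 => p2 | _ => p3 end) 0%Z).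

Fixpoint sum1 (g : nat -> R) (N : nat) : R :=
  match N with
  | O => 0%R
  | S N' => (sum1 g N' + g (S N'))%R
  end.

From Stdlib Require Import Reals ZArith Lia Lra ClassicalEpsilon Classical.

(* Fix a class [i] and shifts [p k <= q^(i)_k]. The point [y] of [P^(i)] using shift [p k] in
   block [k] drives the cocycle [zsum1 y n] up by one every [q^(i)_k] steps through the levels
   [L_(k-1) < j <= L_k] and back down to [0], so [f (T^n x) = z (zsum1 y n)] is constant on the
   [j]-th window of length [q^(i)_k] after [p k]. Taking [z j] to be the sign of the sum of [a]
   over that window turns the ergodic sum into a sum of absolute values of window sums.
   Averaging over the shift compares this with [sum_n |a_n + ... + a_(n+Q-1)|], and windows of
   lengths [Q] and [Q - 1] together dominate [sum_n |a_n| ~ theta N]. So when [3 N] lies in the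
   epoch [[q_(b+1), q_(b+2))], one of the classes of scale [q_b] or [q_b - 1] has a shift with
   signed sum [>= theta N / (16 q_b)], which beats [theta N tau N] by condition (ii). Some class
   recurs along a subsequence of the [N_j]; there the blocks used are distinct, so the shifts glue
   into a single point [x]. *)

Local Open Scope R_scope.

Fixpoint rsum (g : nat -> R) (a l : nat) : R :=
  match l with O => 0 | S l' => rsum g a l' + g (a + l')%nat end.

Lemma sum1_rsum g N : sum1 g N = rsum g 1 N.
Proof. induction N as [|N IH]; simpl; [reflexivity|]. now rewrite IH. Qed.

Lemma sum1_ext g h N : (forall n, g n = h n) -> sum1 g N = sum1 h N.
Proof. intros H. induction N as [|N IH]; simpl; [reflexivity|]. now rewrite IH, H. Qed.

Lemma rsum_add g a l1 l2 : rsum g a (l1 + l2) = rsum g a l1 + rsum g (a + l1) l2.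
Proof.
  induction l2 as [|l2 IH]; simpl.
  - rewrite Nat.add_0_r; ring.
  - rewrite Nat.add_succ_r; simpl. rewrite IH, Nat.add_assoc. ring.
Qed.

Lemma rsum_ext g h a l :
  (forall n, (a <= n < a + l)%nat -> g n = h n) -> rsum g a l = rsum h a l.
Proof.
  induction l as [|l IH]; intros H; simpl; [reflexivity|].
  rewrite IH by (intros; apply H; lia). rewrite H by lia. reflexivity.
Qed.

Lemma rsum_le g h a l :
  (forall n, (a <= n < a + l)%nat -> g n <= h n) -> rsum g a l <= rsum h a l.
Proof.
  induction l as [|l IH]; intros H; simpl; [lra|].
  apply Rplus_le_compat; [apply IH; intros; apply H|apply H]; lia.
Qed.

Lemma rsum_scal c g a l : rsum (fun n => c * g n) a l = c * rsum g a l.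
Proof. induction l as [|l IH]; simpl; [ring|]. rewrite IH; ring. Qed.

Lemma rsum_plus g h a l : rsum (fun n => g n + h n) a l = rsum g a l + rsum h a l.
Proof. induction l as [|l IH]; simpl; [ring|]. rewrite IH; ring. Qed.

Lemma rsum_const c a l : rsum (fun _ => c) a l = INR l * c.
Proof. induction l as [|l IH]; simpl rsum; [simpl; ring|]. rewrite IH, S_INR; ring. Qed.

Lemma rsum_nonneg g a l : (forall n, (a <= n < a + l)%nat -> 0 <= g n) -> 0 <= rsum g a l.
Proof.
  intros H. replace 0 with (rsum (fun _ => 0) a l) by (rewrite rsum_const; ring).
  now apply rsum_le.
Qed.

Lemma rsum_abs_bounds g a l :
  (forall n, (a <= n < a + l)%nat -> Rabs (g n) <= 1) -> - INR l <= rsum g a l <= INR l.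
Proof.
  intros H.
  replace (INR l) with (rsum (fun _ => 1) a l) by (rewrite rsum_const; ring).
  replace (- rsum (fun _ => 1) a l) with (rsum (fun _ => -1) a l) by (rewrite !rsum_const; ring).
  split; apply rsum_le; intros n Hn; specialize (H n Hn);
    pose proof (Rle_abs (g n)); pose proof (Rle_abs (- g n)); rewrite Rabs_Ropp in *; lra.
Qed.

Lemma rsum_shift0 g a l : rsum g a l = rsum (fun n => g (a + n)%nat) 0 l.
Proof. induction l as [|l IH]; simpl; [reflexivity|]. now rewrite IH. Qed.

Lemma rsum_blocks h b Q len :
  rsum h b (len * Q) = rsum (fun t => rsum h (b + t * Q) Q) 0 len.
Proof.
  induction len as [|len IH]; simpl; [reflexivity|].
  replace (Q + len * Q)%nat with (len * Q + Q)%nat by lia.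
  now rewrite rsum_add, IH.
Qed.

Lemma rsum_residues h b Q len :
  rsum (fun P => rsum (fun t => h (b + P + t * Q)%nat) 0 len) 0 Q = rsum h b (len * Q).
Proof.
  induction len as [|len IH].
  - simpl. rewrite rsum_const. ring.
  - simpl rsum at 1. rewrite rsum_plus, IH.
    replace (S len * Q)%nat with (len * Q + Q)%nat by lia.
    rewrite rsum_add. f_equal. rewrite (rsum_shift0 h (b + len * Q)).
    apply rsum_ext. intros n Hn. f_equal. lia.
Qed.

Lemma rsum_le_len_max F Q :
  (1 <= Q)%nat -> exists P, (P < Q)%nat /\ rsum F 0 Q <= INR Q * F P.
Proof.
  intros HQ.
  assert (Hmax : exists P, (P < Q)%nat /\ forall P', (P' < Q)%nat -> F P' <= F P).
  { induction Q as [|Q IH]; [lia|].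
    destruct (Nat.eq_dec Q 0) as [->|HQ0].
    - exists 0%nat. split; [lia|]. intros P' HP'. replace P' with 0%nat by lia. lra.
    - destruct IH as [P [HP HM]]; [lia|].
      destruct (Rle_dec (F Q) (F P)).
      + exists P. split; [lia|]. intros P' HP'.
        destruct (Nat.eq_dec P' Q); [subst; auto|]. apply HM; lia.
      + exists Q. split; [lia|]. intros P' HP'.
        destruct (Nat.eq_dec P' Q); [subst; lra|]. specialize (HM P' ltac:(lia)). lra. }
  destruct Hmax as [P [HP HM]]. exists P. split; [exact HP|].
  rewrite <- (rsum_const (F P) 0). apply rsum_le. intros. apply HM. lia.
Qed.

Lemma rsum_subrange f b l A l' :
  (forall n, 0 <= f n) -> (b <= A)%nat -> (A + l' <= b + l)%nat -> rsum f A l' <= rsum f b l.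
Proof.
  intros Hf H1 H2.
  replace l with ((A - b) + (l' + (b + l - (A + l'))))%nat by lia.
  rewrite rsum_add, rsum_add. replace (b + (A - b))%nat with A by lia.
  assert (0 <= rsum f b (A - b)) by (apply rsum_nonneg; auto).
  assert (0 <= rsum f (A + l') (b + l - (A + l'))) by (apply rsum_nonneg; auto).
  lra.
Qed.

Lemma iterate_choice {A : Type} (Rel : A -> A -> Prop) (x0 : A) :
  (forall x, exists y, Rel x y) ->
  exists u : nat -> A, Rel x0 (u 0%nat) /\ forall t, Rel (u t) (u (S t)).
Proof.
  intros H. destruct (choice Rel H) as [f Hf].
  exists (fun t => Nat.iter (S t) f x0). split; [apply Hf|]. intros t. apply Hf.
Qed.

Lemma strictly_increasing_lt (f : nat -> nat) :
  (forall t, (f t < f (S t))%nat) -> forall a b, (a < b)%nat -> (f a < f b)%nat.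
Proof.
  intros H a b Hab. induction Hab as [|b Hab IH]; [apply H|]. pose proof (H b). lia.
Qed.

Lemma strictly_increasing_ge (f : nat -> nat) :
  (forall t, (f t < f (S t))%nat) -> forall t, (t <= f t)%nat.
Proof. intros H t. induction t as [|t IH]; [lia|]. pose proof (H t). lia. Qed.

Lemma strictly_increasing_inj (f : nat -> nat) :
  (forall t, (f t < f (S t))%nat) -> forall s s', f s = f s' -> s = s'.
Proof.
  intros H s s' E.
  destruct (lt_eq_lt_dec s s') as [[Hlt|Heq]|Hgt]; [|exact Heq|].
  - pose proof (strictly_increasing_lt f H s s' Hlt). lia.
  - pose proof (strictly_increasing_lt f H s' s Hgt). lia.
Qed.

Lemma div2_lt_same_parity a b : (a mod 2 = b mod 2)%nat -> (a < b)%nat -> (a / 2 < b / 2)%nat.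
Proof.
  intros H1 H2. pose proof (Nat.div_mod a 2 ltac:(lia)). pose proof (Nat.div_mod b 2 ltac:(lia)).
  pose proof (Nat.mod_upper_bound a 2 ltac:(lia)). pose proof (Nat.mod_upper_bound b 2 ltac:(lia)).
  lia.
Qed.

Lemma infinitely_often_subsequence (P : nat -> Prop) :
  (forall M, exists t, (M <= t)%nat /\ P t) ->
  exists u : nat -> nat, (forall s, (u s < u (S s))%nat) /\ forall s, P (u s).
Proof.
  intros H.
  destruct (iterate_choice (fun x y => (x < y)%nat /\ P y) 0%nat) as [u [H0 Hu]].
  - intros x. destruct (H (S x)) as [t [Ht HPt]]. exists t. split; [lia|exact HPt].
  - exists u. split; intros s; [apply Hu|]. destruct s as [|s]; [apply H0|apply Hu].
Qed.

Lemma exists_class_infinitely_often (c : nat -> nat) K :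
  (forall t, (c t <= K)%nat) ->
  exists i, (i <= K)%nat /\ forall M, exists t, (M <= t)%nat /\ c t = i.
Proof.
  revert c. induction K as [|K IH]; intros c Hc.
  { exists 0%nat. split; [lia|]. intros M. exists M. split; [lia|]. specialize (Hc M). lia. }
  destruct (classic (forall M, exists t, (M <= t)%nat /\ c t = S K)) as [Hinf|Hfin].
  { exists (S K). split; [lia|exact Hinf]. }
  apply not_all_ex_not in Hfin as [M HM].
  destruct (IH (fun t => c (M + t)%nat)) as [i [Hi Hinf]].
  - intros t. specialize (Hc (M + t)%nat).
    assert (c (M + t)%nat <> S K) by (intros E; apply HM; exists (M + t)%nat; split; [lia|exact E]).
    lia.
  - exists i. split; [lia|]. intros M'. destruct (Hinf M') as [t [Ht E]].
    exists (M + t)%nat. split; [lia|exact E].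
Qed.

Lemma glue_values (g v bound : nat -> nat) :
  (forall s, (v s <= bound (g s))%nat) -> (forall s s', g s = g s' -> s = s') ->
  exists p : nat -> nat, (forall k, (p k <= bound k)%nat) /\ forall s, p (g s) = v s.
Proof.
  intros Hv Hg.
  exists (fun k => Nat.min (v (epsilon (inhabits 0%nat) (fun s => g s = k))) (bound k)).
  split; [intros; lia|]. intros s.
  rewrite (Hg (epsilon (inhabits 0%nat) (fun s' => g s' = g s)) s).
  - specialize (Hv s). lia.
  - apply (epsilon_spec (inhabits 0%nat) (fun s' => g s' = g s)). now exists s.
Qed.

Lemma Rdiv_ge_of_mul_ge x c d : 0 < d -> x >= c * d -> x / d >= c.
Proof.
  intros Hd H. apply Rle_ge, (Rmult_le_reg_r d); [exact Hd|].
  unfold Rdiv. rewrite Rmult_assoc, Rinv_l, Rmult_1_r by lra. lra.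
Qed.

Lemma Rge_div_sub_iff x t c d : 0 < d -> (x >= t / d - c <-> d * (x + c) >= t).
Proof.
  intros Hd. split; intros H.
  - replace t with (d * (t / d)) by (field; lra). apply Rle_ge, Rmult_le_compat_l; lra.
  - apply Rle_ge. cut (t / d <= x + c); [lra|].
    apply (Rmult_le_reg_l d); [exact Hd|]. replace (d * (t / d)) with t by (field; lra). lra.
Qed.

Lemma eventually_ge_half (x : nat -> R) (d : nat -> nat) theta :
  0 < theta -> Un_cv (fun j => x j / INR (d j)) theta ->
  exists j0, forall j, (j0 <= j)%nat -> (1 <= d j)%nat -> x j >= theta * INR (d j) / 2.
Proof.
  intros Hth Hlim. destruct (Hlim (theta / 2) ltac:(lra)) as [j0 Hj0].
  exists j0. intros j Hj Hd. specialize (Hj0 j Hj). unfold R_dist in Hj0.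
  apply Rabs_def2 in Hj0 as [_ Hj0].
  assert (HdR : 0 < INR (d j)) by (apply lt_0_INR; lia).
  assert (x j = x j / INR (d j) * INR (d j)) by (field; lra).
  nra.
Qed.

Lemma frequently_ratio_ge (F tau : nat -> R) (N jt : nat -> nat) theta :
  0 < theta -> (forall s, (jt s < jt (S s))%nat) -> (forall j, (N j < N (S j))%nat) ->
  (forall s, 0 < tau (N (jt s))) -> (forall s, F (N (jt s)) >= theta * tau (N (jt s))) ->
  exists c, 0 < c /\ forall M, exists N', (M < N')%nat /\ F N' / tau N' >= c.
Proof.
  intros Hth Hjt HN Htau HF. exists theta. split; [exact Hth|]. intros M.
  exists (N (jt (S M))). split.
  - pose proof (strictly_increasing_ge N HN (jt (S M))).
    pose proof (strictly_increasing_ge jt Hjt (S M)). lia.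
  - now apply Rdiv_ge_of_mul_ge.
Qed.

Record growing (q : nat -> nat) (i : nat) : Prop := {
  qq_ge_2 : forall k, (1 <= k)%nat -> (2 <= qq q i k)%nat;
  qq_step : forall k, (1 <= k)%nat -> (3 * qq q i k + 3 <= qq q i (S k))%nat;
  qq_sq : forall k, (1 <= k)%nat -> (qq q i k * qq q i k <= qq q i (S k))%nat }.

Definition admissible (q : nat -> nat) (i : nat) (p : nat -> nat) : Prop :=
  forall k, (1 <= k)%nat -> (p k <= qq q i k)%nat.

Definition interval_index (g : nat -> nat) (lo n : nat) : nat :=
  epsilon (inhabits 0%nat) (fun k => (lo <= k /\ g k <= n < g (S k))%nat).

Lemma interval_index_spec g lo n k :
  (forall a b, (lo <= a <= b)%nat -> (g a <= g b)%nat) ->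
  (lo <= k)%nat -> (g k <= n < g (S k))%nat -> interval_index g lo n = k.
Proof.
  intros Hg Hk Hn. unfold interval_index.
  destruct (epsilon_spec (inhabits 0%nat) (fun k => (lo <= k /\ g k <= n < g (S k))%nat)
              (ex_intro _ k (conj Hk Hn))) as [H1 H2].
  set (k' := epsilon _ _) in *.
  destruct (lt_eq_lt_dec k' k) as [[Hlt|Heq]|Hgt]; [|exact Heq|].
  - pose proof (Hg (S k') k ltac:(lia)). lia.
  - pose proof (Hg (S k) k' ltac:(lia)). lia.
Qed.

Definition block (q : nat -> nat) (i n : nat) : nat := interval_index (qq q i) 1 n.

Definition level_block (q : nat -> nat) (i j : nat) : nat :=
  interval_index (fun k => S (LL q i (k - 1))) 2 j.

Definition ypoint (q : nat -> nat) (i : nat) (p : nat -> nat) (n : nat) : Z :=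
  if (n <? qq q i 1)%nat then 0%Z
  else shiftR (p (block q i n)) (sseq q i (block q i n)) n.

Fixpoint zsum1 (y : nat -> Z) (n : nat) : Z :=
  match n with O => 0%Z | S m => (zsum1 y m + y (S m))%Z end.

(* Closed form of the partial sums of [shiftR P (sseq q i k)]: the height climbs by one at
   each of the first [L] multiples of [Q] after [P], then descends back to [0]. *)
Definition ramp (L Q P n : nat) : Z :=
  let d := ((n - P) / Q)%nat in
  (Z.of_nat (Nat.min L d) - Z.of_nat (Nat.min L (d - L)))%Z.

Section Blocks.

Local Open Scope nat_scope.

Variables (q : nat -> nat) (i : nat).
Hypothesis grow : growing q i.

Lemma qq_mono a b : 1 <= a -> a <= b -> qq q i a <= qq q i b.
Proof.
  intros Ha Hab. induction Hab as [|b Hab IH]; [lia|].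
  pose proof (qq_step q i grow b ltac:(lia)). lia.
Qed.

Lemma LL_mul_le k : 3 * qq q i k * LL q i k <= qq q i (S k).
Proof. apply Nat.Div0.mul_div_le. Qed.

Lemma LL_mul_gt k : 1 <= qq q i k -> qq q i (S k) < 3 * qq q i k * (LL q i k + 1).
Proof.
  intros H. unfold LL.
  pose proof (Nat.div_mod (qq q i (S k)) (3 * qq q i k) ltac:(lia)).
  pose proof (Nat.mod_upper_bound (qq q i (S k)) (3 * qq q i k) ltac:(lia)). nia.
Qed.

Lemma LL_le_succ k : 1 <= k -> LL q i k <= LL q i (S k).
Proof.
  intros Hk.
  pose proof (LL_mul_le k). pose proof (LL_mul_gt (S k)).
  pose proof (qq_sq q i grow (S k) ltac:(lia)). pose proof (qq_ge_2 q i grow k Hk).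
  pose proof (qq_ge_2 q i grow (S k) ltac:(lia)).
  destruct (Nat.le_gt_cases (LL q i k) (LL q i (S k))) as [|Hlt]; [assumption|exfalso].
  (* otherwise [qq (S k)^2 <= qq (S (S k)) < 3 qq (S k) LL k], so [qq (S k) < 3 LL k] *)
  assert (qq q i (S k) < 3 * LL q i k) by nia.
  nia.
Qed.

Lemma LL_mono a b : 1 <= a -> a <= b -> LL q i a <= LL q i b.
Proof.
  intros Ha Hab. induction Hab as [|b Hab IH]; [lia|].
  pose proof (LL_le_succ b ltac:(lia)). lia.
Qed.

Lemma LL_pred_le k : 2 <= k -> 3 * LL q i (k - 1) <= qq q i k.
Proof.
  intros Hk. pose proof (LL_mul_le (k - 1)). replace (S (k - 1)) with k in * by lia.
  pose proof (qq_ge_2 q i grow (k - 1) ltac:(lia)). nia.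
Qed.

Lemma block_fits k : 1 <= k -> qq q i k + 2 * LL q i k * qq q i k + 1 <= qq q i (S k).
Proof. intros Hk. pose proof (LL_mul_le k). pose proof (qq_step q i grow k Hk). nia. Qed.

Lemma block_spec n k : 1 <= k -> qq q i k <= n < qq q i (S k) -> block q i n = k.
Proof. intros. apply interval_index_spec; auto. intros. apply qq_mono; lia. Qed.

Lemma level_block_spec j k : 2 <= k -> LL q i (k - 1) < j <= LL q i k -> level_block q i j = k.
Proof.
  intros Hk Hj. apply interval_index_spec; [|lia|replace (S k - 1) with k by lia; lia].
  intros a b Hab. pose proof (LL_mono (a - 1) (b - 1) ltac:(lia) ltac:(lia)). lia.
Qed.

Lemma ypoint_in_block p n k :
  1 <= k -> qq q i k <= n < qq q i (S k) -> ypoint q i p n = shiftR (p k) (sseq q i k) n.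
Proof.
  intros Hk Hn. unfold ypoint.
  pose proof (qq_mono 1 k ltac:(lia) Hk).
  destruct (Nat.ltb_spec n (qq q i 1)); [lia|].
  now rewrite (block_spec n k Hk Hn).
Qed.

Lemma ypoint_Pset p : admissible q i p -> Pset q i (ypoint q i p).
Proof.
  intros Hp. split; [|split].
  - intros n _. unfold ypoint, shiftR, sseq, trit.
    destruct (_ <? _); [auto|]. destruct (_ <=? _); [auto|].
    repeat destruct (andb _ _); auto.
  - intros n Hn. unfold ypoint. destruct (Nat.ltb_spec n (qq q i 1)); [reflexivity|lia].
  - intros k Hk. exists (p k). split; [auto|]. intros n Hn.
    pose proof (qq_step q i grow k Hk).
    apply ypoint_in_block; lia.
Qed.

Lemma div_succ_cases m Q : 1 <= Q -> 1 <= m ->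
  (m mod Q = 0 /\ m / Q = S ((m - 1) / Q)) \/ (m mod Q <> 0 /\ m / Q = (m - 1) / Q).
Proof.
  intros HQ Hm.
  pose proof (Nat.div_mod (m - 1) Q ltac:(lia)).
  pose proof (Nat.mod_upper_bound (m - 1) Q ltac:(lia)).
  set (d := (m - 1) / Q) in *. set (r := (m - 1) mod Q) in *.
  destruct (Nat.eq_dec r (Q - 1)).
  - left. split.
    + symmetry. apply (Nat.mod_unique m Q (S d) 0); lia.
    + symmetry. apply (Nat.div_unique m Q (S d) 0); lia.
  - right. split.
    + rewrite <- (Nat.mod_unique m Q d (S r)); lia.
    + symmetry. apply (Nat.div_unique m Q d (S r)); lia.
Qed.

Lemma ramp_succ k P n : 1 <= qq q i k ->
  ramp (LL q i k) (qq q i k) P (S n)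
  = (ramp (LL q i k) (qq q i k) P n + shiftR P (sseq q i k) (S n))%Z.
Proof.
  intros HQ. unfold shiftR. destruct (Nat.leb_spec (S n) P).
  - unfold ramp. replace (S n - P) with 0 by lia. replace (n - P) with 0 by lia. lia.
  - unfold ramp, sseq. set (Q := qq q i k) in *. set (L := LL q i k).
    set (m := S n - P). replace (n - P) with (m - 1) by lia.
    destruct (div_succ_cases m Q HQ ltac:(lia)) as [[H1 H2]|[H1 H2]].
    + rewrite H1, H2, Nat.eqb_refl. destruct (Nat.leb_spec 1 m); [|lia].
      set (d := (m - 1) / Q). cbn [andb].
      destruct (Nat.leb_spec 1 (S d)); destruct (Nat.leb_spec (S d) L); cbn [andb]; try lia;
      destruct (Nat.ltb_spec L (S d)); destruct (Nat.leb_spec (S d) (2 * L)); cbn [andb]; lia.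
    + rewrite H2. replace (m mod Q =? 0) with false by (symmetry; apply Nat.eqb_neq; auto).
      rewrite Bool.andb_false_r. lia.
Qed.

Lemma ramp_small L Q P n : 1 <= Q -> P <= Q -> n + 1 <= Q -> ramp L Q P n = 0%Z.
Proof. intros. unfold ramp. rewrite Nat.div_small by lia. simpl. lia. Qed.

Lemma ramp_large L Q P n : 1 <= Q -> P + 2 * L * Q <= n -> ramp L Q P n = 0%Z.
Proof.
  intros HQ H. unfold ramp.
  assert (2 * L <= (n - P) / Q) by (apply Nat.div_le_lower_bound; lia).
  lia.
Qed.

Lemma ramp_plateau L Q P n j :
  1 <= Q -> j <= L -> P + j * Q <= n < P + j * Q + Q -> ramp L Q P n = Z.of_nat j.
Proof.
  intros HQ Hj H. unfold ramp.
  replace ((n - P) / Q) with j; [lia|].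
  apply (Nat.div_unique _ Q j (n - P - j * Q)); lia.
Qed.

Variable p : nat -> nat.
Hypothesis p_adm : admissible q i p.

Lemma zsum1_ypoint_initial n : n < qq q i 1 -> zsum1 (ypoint q i p) n = 0%Z.
Proof.
  induction n as [|n IH]; intros H; simpl; [reflexivity|]. rewrite IH by lia.
  unfold ypoint. destruct (Nat.ltb_spec (S n) (qq q i 1)); [reflexivity|lia].
Qed.

Lemma zsum1_ypoint_ramp n k :
  1 <= k -> qq q i k - 1 <= n <= qq q i (S k) - 1 ->
  zsum1 (ypoint q i p) n = ramp (LL q i k) (qq q i k) (p k) n.
Proof.
  revert k. induction n as [|n IH]; intros k Hk Hn.
  { pose proof (qq_ge_2 q i grow k Hk). lia. }
  pose proof (qq_ge_2 q i grow k Hk). pose proof (p_adm k Hk).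
  destruct (Nat.eq_dec (S n) (qq q i k - 1)) as [He|He].
  - rewrite ramp_small by lia.
    destruct (Nat.eq_dec k 1) as [->|Hk1]; [apply zsum1_ypoint_initial; lia|].
    (* [S n] is the last index of block [k - 1], where the previous ramp has returned to [0]. *)
    pose proof (qq_ge_2 q i grow (k - 1) ltac:(lia)).
    pose proof (qq_step q i grow (k - 1) ltac:(lia)).
    pose proof (block_fits (k - 1) ltac:(lia)). pose proof (p_adm (k - 1) ltac:(lia)).
    replace k with (S (k - 1)) in He by lia.
    simpl zsum1. rewrite (IH (k - 1)) by lia.
    rewrite (ypoint_in_block p (S n) (k - 1)) by lia.
    rewrite <- ramp_succ by lia. apply ramp_large; lia.
  - simpl zsum1. rewrite (IH k) by lia.
    rewrite (ypoint_in_block p (S n) k) by lia.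
    now rewrite <- ramp_succ by lia.
Qed.

End Blocks.

Definition window_sum (q : nat -> nat) (i : nat) (p : nat -> nat) (a : nat -> R) (k j : nat) : R :=
  rsum a (p k + j * qq q i k) (qq q i k).

Definition sign (x : R) : Z := if Rle_dec 0 x then 1%Z else (-1)%Z.

Definition zsign (q : nat -> nat) (i : nat) (p : nat -> nat) (a : nat -> R) (m : Z) : Z :=
  sign (window_sum q i p a (level_block q i (Z.to_nat m)) (Z.to_nat m)).

Definition signed_term (q : nat -> nat) (i : nat) (p : nat -> nat) (a : nat -> R) (n : nat) : R :=
  IZR (zsign q i p a (zsum1 (ypoint q i p) n)) * a n.

Definition signed_sum (q : nat -> nat) (i : nat) (p : nat -> nat) (a : nat -> R) (N : nat) : R :=
  sum1 (signed_term q i p a) N.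

Definition good_shift (q : nat -> nat) (i : nat) (a : nat -> R) (k N : nat) (c : R) (P : nat)
  : Prop :=
  (P < qq q i k)%nat /\
  forall p, admissible q i p -> p k = P -> signed_sum q i p a N >= c.

Lemma sign_trit x : trit (sign x).
Proof. unfold sign, trit. destruct (Rle_dec 0 x); auto. Qed.

Lemma sign_mul_self x : IZR (sign x) * x = Rabs x.
Proof.
  unfold sign. destruct (Rle_dec 0 x).
  - rewrite Rabs_right by lra. simpl. ring.
  - rewrite Rabs_left by lra. simpl. ring.
Qed.

Lemma Rabs_sign x : Rabs (IZR (sign x)) = 1.
Proof. unfold sign. destruct (Rle_dec 0 x); [rewrite Rabs_right|rewrite Rabs_left]; lra. Qed.

Section Windows.

Variables (q : nat -> nat) (i : nat) (a : nat -> R) (p : nat -> nat).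
Hypothesis grow : growing q i.
Hypothesis a_bound : forall n, (1 <= n)%nat -> Rabs (a n) <= 1.
Hypothesis p_adm : admissible q i p.

Lemma signed_term_bound n : (1 <= n)%nat -> Rabs (signed_term q i p a n) <= 1.
Proof.
  intros Hn. unfold signed_term, zsign. rewrite Rabs_mult, Rabs_sign, Rmult_1_l. auto.
Qed.

Lemma signed_window k j : (2 <= k)%nat -> (LL q i (k - 1) < j <= LL q i k)%nat ->
  rsum (signed_term q i p a) (p k + j * qq q i k) (qq q i k) = Rabs (window_sum q i p a k j).
Proof.
  intros Hk Hj. set (Q := qq q i k).
  pose proof (qq_ge_2 q i grow k ltac:(lia)). pose proof (block_fits q i grow k ltac:(lia)).
  pose proof (p_adm k ltac:(lia)).
  rewrite <- sign_mul_self. unfold window_sum at 2. rewrite <- rsum_scal.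
  apply rsum_ext. intros n Hn.
  unfold signed_term, zsign. do 2 f_equal.
  rewrite (zsum1_ypoint_ramp q i grow p p_adm n k) by nia.
  rewrite (ramp_plateau _ Q _ n j) by (unfold Q in *; lia).
  rewrite Nat2Z.id. now rewrite (level_block_spec q i grow j k).
Qed.

Lemma signed_sum_ge_windows k len N : (2 <= k)%nat ->
  (LL q i (k - 1) + 1 + len <= LL q i k + 1)%nat ->
  (p k + (LL q i (k - 1) + 1 + len) * qq q i k <= N + 1)%nat ->
  signed_sum q i p a N >=
  rsum (fun t => Rabs (window_sum q i p a k (LL q i (k - 1) + 1 + t))) 0 len
  - (INR N - INR (len * qq q i k)).
Proof.
  intros Hk Hlen HN.
  set (Q := qq q i k) in *. set (J0 := (LL q i (k - 1) + 1)%nat) in *.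
  pose proof (qq_ge_2 q i grow k ltac:(lia)).
  (* split [1, N] into a head of length [A], [len] full windows, and a tail of length [R0] *)
  set (A := (p k + J0 * Q - 1)%nat). set (R0 := (N - A - len * Q)%nat).
  assert (HA : (1 + A = p k + J0 * Q)%nat) by (unfold A, J0; nia).
  assert (HNs : N = (A + len * Q + R0)%nat) by (unfold R0; nia).
  unfold signed_sum. rewrite sum1_rsum, HNs at 1. rewrite rsum_add, rsum_add.
  assert (Hhead := rsum_abs_bounds (signed_term q i p a) 1 A
                     ltac:(intros; apply signed_term_bound; lia)).
  assert (Htail := rsum_abs_bounds (signed_term q i p a) (1 + A + len * Q) R0
                     ltac:(intros; apply signed_term_bound; lia)).
  assert (Hwin : rsum (signed_term q i p a) (1 + A) (len * Q) =
                 rsum (fun t => Rabs (window_sum q i p a k (J0 + t))) 0 len).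
  { rewrite rsum_blocks. apply rsum_ext. intros t Ht.
    replace (1 + A + t * Q)%nat with (p k + (J0 + t) * Q)%nat by (rewrite HA; ring).
    apply signed_window; unfold J0 in *; lia. }
  rewrite Hwin.
  assert (INR N = INR A + INR (len * Q) + INR R0) by (rewrite HNs at 1; rewrite !plus_INR; ring).
  rewrite Nat.add_assoc. lra.
Qed.

End Windows.

Lemma good_shift_weaken q i a k N c c' P :
  c' <= c -> good_shift q i a k N c P -> good_shift q i a k N c' P.
Proof. intros Hc [HP H]. split; [exact HP|]. intros p Hp HpP. specialize (H p Hp HpP). lra. Qed.

Lemma exists_window_count Q L J0 N Qb :
  (1 <= Q)%nat -> (Q <= Qb)%nat -> (J0 <= L + 1)%nat -> (J0 * Q <= Qb * Qb)%nat ->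
  (Qb * Qb + 3 * Qb <= N)%nat -> (N <= Q * (L + 1))%nat ->
  exists len, (J0 + len <= L + 1 /\ (J0 + len) * Q + Q <= N /\ N <= (J0 + len) * Q + 3 * Qb)%nat.
Proof.
  intros HQ HQb HJ0 HJ0Q HN1 HN2.
  set (D := (N / Q)%nat).
  assert (HD1 : (D * Q <= N)%nat) by (unfold D; rewrite Nat.mul_comm; apply Nat.Div0.mul_div_le).
  assert (HD2 : (N < (D + 1) * Q)%nat).
  { unfold D. pose proof (Nat.div_mod N Q ltac:(lia)).
    pose proof (Nat.mod_upper_bound N Q ltac:(lia)). nia. }
  assert (HD3 : (J0 + 3 < D + 1)%nat).
  { apply (Nat.mul_lt_mono_pos_r Q); [lia|]. nia. }
  exists (Nat.min (L + 1) (D - 1) - J0)%nat.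
  replace (J0 + (Nat.min (L + 1) (D - 1) - J0))%nat with (Nat.min (L + 1) (D - 1)) by lia.
  assert (HDQ : ((D - 1) * Q + Q = D * Q)%nat) by nia.
  destruct (Nat.min_spec (L + 1) (D - 1)) as [[Hlt ->]|[Hge ->]].
  - assert ((L + 2) * Q <= D * Q)%nat by (apply Nat.mul_le_mono_r; lia). nia.
  - nia.
Qed.

Section Averaging.

Variables (q : nat -> nat) (i : nat) (a : nat -> R).
Hypothesis grow : growing q i.
Hypothesis a_bound : forall n, (1 <= n)%nat -> Rabs (a n) <= 1.

(* Averaging [signed_sum] over the shift [P < qq q i k] turns the windows of block [k] into all
   windows of length [qq q i k] inside [[Qb^2, N - 3 Qb]]; some shift beats the average. *)
Lemma exists_good_shift_window_average k N Qb :
  (2 <= k)%nat -> (qq q i k <= Qb <= qq q i k + 1)%nat -> (3 <= qq q i k)%nat ->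
  (3 * N <= qq q i (S k) + 2)%nat -> (Qb * Qb + 3 * Qb <= N)%nat ->
  exists P, good_shift q i a k N
    (rsum (fun n => Rabs (rsum a n (qq q i k))) (Qb * Qb) (N - 3 * Qb - Qb * Qb) / INR (qq q i k)
     - INR (Qb * Qb + 3 * Qb)) P.
Proof.
  intros Hk HQb HQ3 HN1 HN2.
  set (Q := qq q i k) in *. set (L := LL q i k). set (J0 := (LL q i (k - 1) + 1)%nat).
  pose proof (LL_mul_gt q i k ltac:(lia)) as HL1. pose proof (LL_pred_le q i grow k Hk) as HL2.
  pose proof (LL_mono q i grow (k - 1) k ltac:(lia) ltac:(lia)) as HL3.
  fold Q L in HL1, HL2, HL3.
  assert (HJ0Q : (J0 * Q <= Qb * Qb)%nat) by (unfold J0; nia).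
  destruct (exists_window_count Q L J0 N Qb) as [len [Hlen1 [Hlen2 Hlen3]]];
    [lia|lia|unfold J0; lia|exact HJ0Q|exact HN2|nia|].
  set (h := fun n => Rabs (rsum a n Q)).
  set (F := fun P => rsum (fun t => h (J0 * Q + P + t * Q)%nat) 0 len).
  destruct (rsum_le_len_max F Q ltac:(lia)) as [P [HP HPF]].
  exists P. split; [exact HP|]. intros p Hp HpP.
  assert (Hblk : rsum F 0 Q = rsum h (J0 * Q) (len * Q)) by apply rsum_residues.
  assert (Hks := signed_sum_ge_windows q i a p grow a_bound Hp k len N Hk
                   ltac:(unfold J0 in *; lia) ltac:(rewrite HpP; fold J0 Q; lia)).
  fold J0 Q in Hks.
  assert (HF : rsum (fun t => Rabs (window_sum q i p a k (J0 + t))) 0 len = F P).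
  { unfold F. apply rsum_ext. intros t Ht. unfold h, window_sum. fold Q. rewrite HpP.
    do 2 f_equal. ring. }
  rewrite HF in Hks.
  assert (Hsub : rsum h (Qb * Qb) (N - 3 * Qb - Qb * Qb) <= rsum h (J0 * Q) (len * Q)).
  { apply rsum_subrange; [intros; apply Rabs_pos|exact HJ0Q|nia]. }
  assert (HE : (N <= len * Q + (Qb * Qb + 3 * Qb))%nat) by nia.
  apply le_INR in HE. rewrite plus_INR in HE.
  assert (0 < INR Q) by (apply lt_0_INR; lia).
  fold h. apply Rge_div_sub_iff; [assumption|]. nra.
Qed.

End Averaging.

(* A window of length [Q] and the one of length [Q - 1] starting at the same point differ by one
   term, so together they control every [|a n|]. *)
Lemma abs_window_pair_sum_ge a Qb N :
  (forall n, (1 <= n)%nat -> Rabs (a n) <= 1) -> (2 <= Qb)%nat -> (Qb * Qb + 3 * Qb <= N)%nat ->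
  rsum (fun n => Rabs (rsum a n Qb)) (Qb * Qb) (N - 3 * Qb - Qb * Qb) +
  rsum (fun n => Rabs (rsum a n (Qb - 1))) (Qb * Qb) (N - 3 * Qb - Qb * Qb) >=
  sum1 (fun n => Rabs (a n)) N - INR (Qb * Qb + 3 * Qb).
Proof.
  intros Ha HQ HN.
  set (A := (Qb * Qb)%nat). set (l := (N - 3 * Qb - A)%nat).
  rewrite <- rsum_plus.
  assert (H1 : rsum (fun n => Rabs (a (n + (Qb - 1))%nat)) A l <=
               rsum (fun n => Rabs (rsum a n Qb) + Rabs (rsum a n (Qb - 1))) A l).
  { apply rsum_le. intros n Hn.
    replace (rsum a n Qb) with (rsum a n (S (Qb - 1))) by (f_equal; lia). simpl rsum.
    set (x := rsum a n (Qb - 1)). set (y := a (n + (Qb - 1))%nat).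
    pose proof (Rabs_triang (x + y) (- x)). rewrite Rabs_Ropp in H.
    replace (x + y + - x) with y in H by ring. lra. }
  assert (H2 : rsum (fun n => Rabs (a (n + (Qb - 1))%nat)) A l =
               rsum (fun n => Rabs (a n)) (A + (Qb - 1)) l).
  { rewrite rsum_shift0, (rsum_shift0 _ (A + (Qb - 1))). apply rsum_ext.
    intros. do 2 f_equal. lia. }
  rewrite sum1_rsum.
  set (r := (N - (A + Qb - 2) - l)%nat).
  assert (HNs : N = (A + Qb - 2 + (l + r))%nat) by (unfold r, l, A in *; lia).
  rewrite HNs at 1. rewrite rsum_add, rsum_add.
  replace (1 + (A + Qb - 2))%nat with (A + (Qb - 1))%nat by (unfold A; nia).
  assert (B1 := rsum_abs_bounds (fun n => Rabs (a n)) 1 (A + Qb - 2)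
                  ltac:(intros; cbv beta; rewrite Rabs_Rabsolu; apply Ha; lia)).
  assert (B2 := rsum_abs_bounds (fun n => Rabs (a n)) (A + (Qb - 1) + l) r
                  ltac:(intros; cbv beta; rewrite Rabs_Rabsolu; apply Ha; lia)).
  assert (HE : (A + Qb - 2 + r <= A + 3 * Qb)%nat) by (unfold r, l, A in *; lia).
  apply le_INR in HE. rewrite plus_INR in HE.
  lra.
Qed.

Lemma quartic_scale_bound X n theta :
  4 <= X -> X * X * X * X <= 3 * n -> 48 <= theta * X ->
  theta * n / (16 * X) <= (theta * n / 2 - (X * X + 3 * X)) / (2 * X) - (X * X + 3 * X).
Proof.
  intros HX Hn Hth.
  assert (HthN : 16 * X * X * X <= theta * n).
  { assert (48 * (X * X * X) <= theta * X * (X * X * X)).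
    { apply Rmult_le_compat_r; [|lra]. apply Rmult_le_pos; [|lra]. apply Rmult_le_pos; lra. }
    nra. }
  apply (Rmult_le_reg_r (16 * X)); [lra|].
  replace (((theta * n / 2 - (X * X + 3 * X)) / (2 * X) - (X * X + 3 * X)) * (16 * X))
    with (4 * theta * n - 8 * (X * X + 3 * X) - 16 * X * (X * X + 3 * X)) by (field; lra).
  replace (theta * n / (16 * X) * (16 * X)) with (theta * n) by (field; lra).
  nra.
Qed.

Lemma exists_good_shift_pair q i i' a k N theta :
  growing q i -> growing q i' ->
  qq q i' k = (qq q i k - 1)%nat -> qq q i' (S k) = (qq q i (S k) - 1)%nat ->
  (forall n, (1 <= n)%nat -> Rabs (a n) <= 1) -> (2 <= k)%nat -> (4 <= qq q i k)%nat ->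
  (3 * N <= qq q i (S k) + 1)%nat -> (qq q i k ^ 4 <= 3 * N)%nat ->
  0 < theta -> 48 <= theta * INR (qq q i k) ->
  sum1 (fun n => Rabs (a n)) N >= theta * INR N / 2 ->
  exists s, (s = i \/ s = i') /\
    exists P, good_shift q s a k N (theta * INR N / (16 * INR (qq q i k))) P.
Proof.
  intros G G' E1 E2 Ha Hk HQ4 HN1 HN2 Hth Hth48 Hsum.
  set (Qb := qq q i k) in *.
  assert (HN3 : (Qb * Qb + 3 * Qb <= N)%nat).
  { assert (Qb ^ 4 = Qb * Qb * (Qb * Qb))%nat by (simpl; ring). nia. }
  destruct (exists_good_shift_window_average q i a G Ha k N Qb Hk
              ltac:(lia) ltac:(lia) ltac:(lia) HN3) as [P HP].
  destruct (exists_good_shift_window_average q i' a G' Ha k N Qb Hk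
              ltac:(lia) ltac:(lia) ltac:(lia) HN3) as [P' HP'].
  rewrite E1 in HP'. fold Qb in HP, HP'.
  pose proof (abs_window_pair_sum_ge a Qb N Ha ltac:(lia) HN3) as Hpair.
  set (T := rsum (fun n => Rabs (rsum a n Qb)) (Qb * Qb) (N - 3 * Qb - Qb * Qb)) in *.
  set (T' := rsum (fun n => Rabs (rsum a n (Qb - 1))) (Qb * Qb) (N - 3 * Qb - Qb * Qb)) in *.
  set (E := INR (Qb * Qb + 3 * Qb)) in *.
  set (X := INR Qb) in *.
  assert (HX : INR (Qb - 1) = X - 1) by (unfold X; rewrite minus_INR by lia; simpl; ring).
  rewrite HX in HP'.
  assert (HE : E = X * X + 3 * X) by (unfold E, X; rewrite plus_INR, !mult_INR; simpl; ring).
  assert (HX4 : 4 <= X) by (unfold X; replace 4 with (INR 4) by (simpl; ring); apply le_INR; lia).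
  assert (HT' : 0 <= T') by (apply rsum_nonneg; intros; apply Rabs_pos).
  assert (HN4 : X * X * X * X <= 3 * INR N).
  { unfold X. replace (INR Qb * INR Qb * INR Qb * INR Qb) with (INR (Qb ^ 4))
      by (rewrite pow_INR; simpl; ring).
    replace 3 with (INR 3) by (simpl; ring). rewrite <- mult_INR. apply le_INR; lia. }
  assert (Hbound : theta * INR N / (16 * X) <= (T + T') / (2 * X) - E).
  { apply (Rle_trans _ _ _ (quartic_scale_bound X (INR N) theta HX4 HN4 Hth48)).
    rewrite <- HE. apply Rplus_le_compat_r, Rmult_le_compat_r; [|lra].
    apply Rlt_le, Rinv_0_lt_compat. lra. }
  destruct (Rle_dec T' T) as [Hc|Hc].
  - exists i. split; [now left|]. exists P. refine (good_shift_weaken _ _ _ _ _ _ _ _ _ HP).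
    apply (Rle_trans _ _ _ Hbound), Rplus_le_compat_r.
    replace (T / X) with ((T + T) / (2 * X)) by (field; lra).
    apply Rmult_le_compat_r; [apply Rlt_le, Rinv_0_lt_compat|]; lra.
  - exists i'. split; [now right|]. exists P'. refine (good_shift_weaken _ _ _ _ _ _ _ _ _ HP').
    apply (Rle_trans _ _ _ Hbound), Rplus_le_compat_r.
    apply (Rle_trans _ (T' / X)).
    + replace (T' / X) with ((T' + T') / (2 * X)) by (field; lra).
      apply Rmult_le_compat_r; [apply Rlt_le, Rinv_0_lt_compat|]; lra.
    + apply Rmult_le_compat_l; [lra|]. apply Rinv_le_contravar; lra.
Qed.

Section Scales.

Local Open Scope nat_scope.

Variable q : nat -> nat.
Hypothesis q1_ge_2 : 2 <= q 1.
Hypothesis q_incr : forall k, 1 <= k -> q k < q (S k).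
Hypothesis q_growth : forall k, 1 <= k -> q k ^ 4 + 3 * q k < q (S k).

Lemma q_lt a b : 1 <= a -> a < b -> q a < q b.
Proof.
  intros Ha Hab. induction Hab as [|b Hab IH]; [now apply q_incr|].
  pose proof (q_incr b ltac:(lia)). lia.
Qed.

Lemma q_ge_succ k : 1 <= k -> k + 1 <= q k.
Proof. intros Hk. induction Hk as [|k Hk IH]; [lia|]. pose proof (q_incr k ltac:(lia)). lia. Qed.

Lemma q_ge_16 b : 2 <= b -> 16 <= q b.
Proof.
  intros Hb. pose proof (q_growth 1 ltac:(lia)).
  assert (q 2 <= q b) by (destruct (Nat.eq_dec b 2); [subst; lia|apply Nat.lt_le_incl, q_lt; lia]).
  assert (q 1 ^ 4 = q 1 * q 1 * (q 1 * q 1)) by (simpl; ring). nia.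
Qed.

Lemma growing_all i : i <= 3 -> growing q i.
Proof.
  intros Hi.
  (* with [c = q j] and [d = q (j + 2)], both [c] and [c - 1] satisfy the three growth conditions *)
  assert (G : forall j, 2 <= j ->
    2 <= q j - 1 /\ 3 * (q j - 1) + 3 <= q (S (S j)) - 1 /\
    (q j - 1) * (q j - 1) <= q (S (S j)) - 1 /\
    3 * q j + 3 <= q (S (S j)) /\ q j * q j <= q (S (S j))).
  { intros j Hj. pose proof (q_ge_16 j Hj).
    pose proof (q_incr j ltac:(lia)). pose proof (q_growth (S j) ltac:(lia)).
    set (c := q j) in *. set (e := q (S j)) in *. set (d := q (S (S j))) in *.
    assert (e ^ 4 = e * e * (e * e)) by (simpl; ring).
    assert (e * e * (e * e) >= e * e) by nia.
    assert (e * e >= (c + 1) * (c + 1)) by nia.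
    assert ((c - 1) * (c - 1) <= c * c) by (apply Nat.mul_le_mono; lia).
    lia. }
  assert (E : forall k, 2 * S k = S (S (2 * k))) by (intros; lia).
  assert (E' : forall k, 2 * S k + 1 = S (S (2 * k + 1))) by (intros; lia).
  destruct i as [|[|[|[|]]]]; [| | | |lia]; constructor; intros k Hk; unfold qq; rewrite ?E', ?E.
  all: try (pose proof (G (2 * k) ltac:(lia)); pose proof (q_ge_16 (2 * k) ltac:(lia)); lia).
  all: pose proof (G (2 * k + 1) ltac:(lia)); pose proof (q_ge_16 (2 * k + 1) ltac:(lia)); lia.
Qed.

(* [3 N] lies in the epoch [[q (b + 1), q (b + 2))]; the block of index [b / 2] of class [b mod 2]
   (scale [q b]) or of class [b mod 2 + 2] (scale [q b - 1]) is then the relevant one. *)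
Lemma exists_good_shift a (theta : R) b N :
  (forall n, 1 <= n -> (Rabs (a n) <= 1)%R) ->
  4 <= b -> q (S b) <= 3 * N -> 3 * N < q (S (S b)) ->
  (0 < theta)%R -> (48 <= theta * INR (q b))%R ->
  (sum1 (fun n => Rabs (a n)) N >= theta * INR N / 2)%R ->
  exists s, s <= 3 /\ s mod 2 = b mod 2 /\
    exists P, good_shift q s a (b / 2) N (theta * INR N / (16 * INR (q b))) P.
Proof.
  intros Ha Hb HN1 HN2 Hth Hth48 Hsum.
  pose proof (q_ge_16 b ltac:(lia)). pose proof (q_growth b ltac:(lia)).
  destruct (Nat.Even_or_Odd b) as [[k ->]|[k ->]].
  - replace (2 * k / 2) with k by (rewrite Nat.mul_comm, Nat.div_mul; lia).
    destruct (exists_good_shift_pair q 0 2 a k N theta (growing_all 0 ltac:(lia))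
                (growing_all 2 ltac:(lia)) eq_refl eq_refl Ha) as [s [Hs HP]];
      unfold qq; try lia; auto.
    { replace (2 * S k) with (S (S (2 * k))) by lia. lia. }
    exists s. split; [lia|]. split; [|exact HP].
    rewrite (Nat.mul_comm 2 k), Nat.Div0.mod_mul. destruct Hs; subst; reflexivity.
  - replace ((2 * k + 1) / 2) with k by (apply (Nat.div_unique _ 2 k 1); lia).
    destruct (exists_good_shift_pair q 1 3 a k N theta (growing_all 1 ltac:(lia))
                (growing_all 3 ltac:(lia)) eq_refl eq_refl Ha) as [s [Hs HP]];
      unfold qq; try lia; auto.
    { replace (2 * S k + 1) with (S (S (2 * k + 1))) by lia. lia. }
    exists s. split; [lia|]. split; [|exact HP].
    replace (2 * k + 1) with (1 + k * 2) by ring. rewrite Nat.Div0.mod_add.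
    destruct Hs; subst; reflexivity.
Qed.

Lemma exists_epoch X thr : 1 <= thr -> q thr <= X -> exists m, thr <= m /\ q m <= X < q (S m).
Proof.
  intros Hthr HX.
  assert (G : forall d m, thr <= m -> q m <= X -> X < q (m + d) ->
            exists m, thr <= m /\ q m <= X < q (S m)).
  { induction d as [|d IH]; intros m Hm H1 H2; [rewrite Nat.add_0_r in H2; lia|].
    destruct (Nat.lt_ge_cases X (q (S m))); [now exists m|].
    apply (IH (S m)); [lia|assumption|now replace (S m + d) with (m + S d) by lia]. }
  apply (G (X + 1) thr); [lia|assumption|]. pose proof (q_ge_succ (thr + (X + 1)) ltac:(lia)). lia.
Qed.

End Scales.

Lemma iter_Tmap n y z k m :
  fst (Nat.iter n Tmap (y, z)) k = y (k + n)%nat /\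
  snd (Nat.iter n Tmap (y, z)) m = z (m + zsum1 y n)%Z.
Proof.
  revert k m. induction n as [|n IH]; intros k m.
  - simpl. rewrite Nat.add_0_r, Z.add_0_r. auto.
  - simpl Nat.iter. unfold Tmap at 1. simpl fst. simpl snd. split.
    + rewrite (proj1 (IH (S k) 0%Z)). f_equal. lia.
    + rewrite (proj2 (IH 0%nat (m + fst (Nat.iter n Tmap (y, z)) 1%nat)%Z)).
      rewrite (proj1 (IH 1%nat 0%Z)). f_equal. simpl zsum1.
      replace (1 + n)%nat with (S n) by lia. lia.
Qed.

Lemma iter_That n p0 p1 p2 p3 i :
  Nat.iter n That (p0, p1, p2, p3, i) =
  (Nat.iter n Tmap p0, Nat.iter n Tmap p1, Nat.iter n Tmap p2, Nat.iter n Tmap p3, i).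
Proof. induction n as [|n IH]; simpl; [reflexivity|]. now rewrite IH. Qed.

Lemma Xi_of_Pset q i y z : Pset q i y -> (forall m, trit (z m)) -> Xi q i (y, z).
Proof. intros Hy Hz m. exists (y, z). split; [now exists 0%nat, y, z|]. auto. Qed.

(* Only the [i]-th factor is seen by [fX]; the other factors are arbitrary points of [X_j]. *)
Definition point (q : nat -> nat) (i : nat) (p : nat -> nat) (a : nat -> R) : Xpt :=
  let c j := if Nat.eqb j i then (ypoint q i p, zsign q i p a)
             else (ypoint q j (fun _ => 0%nat), fun _ : Z => 0%Z) in
  (c 0%nat, c 1%nat, c 2%nat, c 3%nat, i).

Lemma point_inX q i p a :
  (forall j, (j <= 3)%nat -> growing q j) -> (i <= 3)%nat -> admissible q i p ->
  inX q (point q i p a).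
Proof.
  intros G Hi Hp.
  assert (HX : forall j, (j <= 3)%nat ->
            Xi q j (if Nat.eqb j i then (ypoint q i p, zsign q i p a)
                    else (ypoint q j (fun _ => 0%nat), fun _ : Z => 0%Z))).
  { intros j Hj. destruct (Nat.eqb_spec j i) as [->|_].
    - apply Xi_of_Pset; [apply ypoint_Pset; [apply G; lia|exact Hp]|intros; apply sign_trit].
    - apply Xi_of_Pset; [apply ypoint_Pset; [apply G; lia|intros k _; lia]|].
      intros; right; left; reflexivity. }
  unfold inX, point. repeat split; try (apply HX; lia). exact Hi.
Qed.

Lemma point_sum q i p a M : (i <= 3)%nat ->
  sum1 (fun n => fX (Nat.iter n That (point q i p a)) * a n) M = signed_sum q i p a M.
Proof.
  intros Hi. apply sum1_ext. intros n. unfold signed_term. f_equal.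
  unfold point. rewrite iter_That.
  destruct i as [|[|[|[|i]]]]; try lia; cbn [Nat.eqb fX];
    now rewrite (proj2 (iter_Tmap n _ _ 0%nat 0%Z)).
Qed.

Section Selection.

Variables (tau : nat -> R) (q : nat -> nat) (a : nat -> R) (N : nat -> nat) (theta : R).
Hypothesis tau_mono : forall n m : nat, (1 <= n <= m)%nat -> tau m <= tau n.
Hypothesis q1_ge_2 : (2 <= q 1%nat)%nat.
Hypothesis q_incr : forall k : nat, (1 <= k)%nat -> (q k < q (S k))%nat.
Hypothesis q_growth : forall k : nat, (1 <= k)%nat -> (q k ^ 4 + 3 * q k < q (S k))%nat.
Hypothesis tau_small :
  forall k : nat, (1 <= k)%nat -> tau ((q (S k) + 2) / 3)%nat < 1 / (16 * INR (q k)).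
Hypothesis a_bound : forall n : nat, (1 <= n)%nat -> Rabs (a n) <= 1.
Hypothesis N_incr : forall j : nat, (N j < N (S j))%nat.
Hypothesis theta_pos : 0 < theta.
Hypothesis avg_lim : Un_cv (fun j => sum1 (fun n => Rabs (a n)) (N j) / INR (N j)) theta.

Lemma scale_threshold : exists B, forall b, (B <= b)%nat -> 48 <= theta * INR (q b).
Proof.
  destruct (INR_unbounded (48 / theta)) as [n0 Hn0]. exists (S n0). intros b Hb.
  pose proof (q_ge_succ q q1_ge_2 q_incr b ltac:(lia)).
  assert (INR n0 <= INR (q b)) by (apply le_INR; lia).
  assert (48 = theta * (48 / theta)) by (field; lra). nra.
Qed.

Lemma scaled_tau_le b n : (1 <= b)%nat -> (q (S b) <= 3 * n)%nat ->
  theta * INR n * tau n <= theta * INR n / (16 * INR (q b)).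
Proof.
  intros Hb Hn. pose proof (q_ge_succ q q1_ge_2 q_incr b Hb).
  pose proof (q_ge_succ q q1_ge_2 q_incr (S b) ltac:(lia)).
  assert (Hle : tau n <= tau ((q (S b) + 2) / 3)%nat).
  { apply tau_mono. split.
    - apply Nat.div_le_lower_bound; lia.
    - apply Nat.lt_succ_r, Nat.Div0.div_lt_upper_bound; lia. }
  pose proof (tau_small b Hb).
  assert (0 < INR (q b)) by (apply lt_0_INR; lia).
  assert (0 <= INR n) by apply pos_INR.
  unfold Rdiv in *. rewrite Rmult_1_l in *. apply Rmult_le_compat_l; [nra|lra].
Qed.

Lemma epochs_along j0 M0 : (1 <= M0)%nat ->
  exists st mm : nat -> nat,
    (forall t, (st t < st (S t))%nat) /\ (forall t, (mm t < mm (S t))%nat) /\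
    forall t, (j0 <= st t /\ M0 <= mm t /\ q (mm t) <= 3 * N (st t) < q (S (mm t)))%nat.
Proof.
  intros HM0.
  set (Rel := fun x y : nat * nat =>
    (fst x < fst y /\ snd x < snd y /\ j0 <= fst y /\ M0 <= snd y /\
     q (snd y) <= 3 * N (fst y) < q (S (snd y)))%nat).
  destruct (iterate_choice Rel (0, 0)%nat) as [u [H0 Hu]].
  - intros [j m]. set (j' := (S j + j0 + q (S m + M0))%nat).
    assert (Hthr : (q (S m + M0) <= 3 * N j')%nat).
    { pose proof (strictly_increasing_ge N N_incr j'). unfold j' in *. lia. }
    destruct (exists_epoch q q1_ge_2 q_incr (3 * N j') (S m + M0) ltac:(lia) Hthr) as [m' [Hm' Hq]].
    exists (j', m'). unfold Rel; cbn [fst snd]. unfold j' in *. lia.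
  - exists (fun t => fst (u t)), (fun t => snd (u t)).
    split; [intros t; apply Hu|]. split; [intros t; apply Hu|].
    intros [|t]; [apply H0|apply Hu].
Qed.

Lemma exists_good_class_subsequence :
  exists (i : nat) (jt kk P : nat -> nat),
    (i <= 3)%nat /\ (forall s, (jt s < jt (S s))%nat) /\ (forall s, (kk s < kk (S s))%nat) /\
    forall s, (1 <= N (jt s))%nat /\
      good_shift q i a (kk s) (N (jt s)) (theta * INR (N (jt s)) * tau (N (jt s))) (P s).
Proof.
  destruct scale_threshold as [B HB].
  destruct (eventually_ge_half _ N theta theta_pos avg_lim) as [j0 Hj0].
  destruct (epochs_along j0 (B + 5)) as [st [mm [Hst [Hmm Hep]]]]; [lia|].
  assert (HN1 : forall t, (1 <= N (st t))%nat).
  { intros t. destruct (Hep t) as [_ [HM [Hq _]]].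
    pose proof (q_ge_succ q q1_ge_2 q_incr (mm t) ltac:(lia)). lia. }
  assert (Hgood : forall t, exists sP : nat * nat,
    (fst sP <= 3 /\ fst sP mod 2 = (mm t - 1) mod 2)%nat /\
    good_shift q (fst sP) a ((mm t - 1) / 2) (N (st t))
      (theta * INR (N (st t)) * tau (N (st t))) (snd sP)).
  { intros t. destruct (Hep t) as [Hj [HM [Hq1 Hq2]]].
    replace (mm t) with (S (mm t - 1)) in Hq1, Hq2 by lia.
    destruct (exists_good_shift q q1_ge_2 q_incr q_growth a theta (mm t - 1) (N (st t)) a_bound
                ltac:(lia) Hq1 Hq2 theta_pos (HB (mm t - 1)%nat ltac:(lia)) (Hj0 (st t) Hj (HN1 t)))
      as [s [Hs [Hpar [P HP]]]].
    exists (s, P). split; [auto|]. simpl.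
    refine (good_shift_weaken _ _ _ _ _ _ _ _ _ HP).
    apply (scaled_tau_le (mm t - 1)%nat (N (st t))); [lia|exact Hq1]. }
  destruct (choice _ Hgood) as [cP HcP].
  destruct (exists_class_infinitely_often (fun t => fst (cP t)) 3 (fun t => proj1 (proj1 (HcP t))))
    as [i [Hi Hinf]].
  destruct (infinitely_often_subsequence _ Hinf) as [u [Hu Hui]].
  exists i, (fun s => st (u s)), (fun s => (mm (u s) - 1) / 2)%nat, (fun s => snd (cP (u s))).
  split; [exact Hi|]. split; [|split].
  - intros s. apply (strictly_increasing_lt st Hst), Hu.
  - intros s. apply div2_lt_same_parity.
    + destruct (HcP (u s)) as [[_ E1] _]. destruct (HcP (u (S s))) as [[_ E2] _].
      rewrite <- E1, <- E2, !Hui. reflexivity.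
    + pose proof (strictly_increasing_lt mm Hmm _ _ (Hu s)).
      pose proof (proj1 (proj2 (Hep (u s)))). lia.
  - intros s. split; [apply HN1|]. destruct (HcP (u s)) as [_ HP]. now rewrite Hui in HP.
Qed.

End Selection.

Theorem mainTheorem10
  (tau : nat -> R) (q : nat -> nat)
  (Htau_pos : forall n : nat, (1 <= n)%nat -> (0 < tau n)%R)
  (Htau_mono : forall n m : nat, (1 <= n <= m)%nat -> (tau m <= tau n)%R)
  (Htau_lim : Un_cv tau 0%R)
  (Hq1 : (2 <= q 1%nat)%nat)
  (Hq_inc : forall k : nat, (1 <= k)%nat -> (q k < q (S k))%nat)
  (Hq_i : forall k : nat, (1 <= k)%nat -> (q k ^ 4 + 3 * q k < q (S k))%nat)
  (Hq_ii : forall k : nat, (1 <= k)%nat ->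
     (tau ((q (S k) + 2) / 3)%nat < 1 / (16 * INR (q k)))%R)
  (a : nat -> R) (Ha : forall n : nat, (1 <= n)%nat -> (Rabs (a n) <= 1)%R)
  (N : nat -> nat) (HN : forall j : nat, (N j < N (S j))%nat)
  (theta : R) (Htheta : (0 < theta)%R)
  (Hlim : Un_cv (fun j => (sum1 (fun n => Rabs (a n)) (N j) / INR (N j))%R) theta) :
  exists (jt : nat -> nat) (x : Xpt),
    (forall t : nat, (jt t < jt (S t))%nat) /\
    inX q x /\
    (exists t0 : nat, forall t : nat, (t0 <= t)%nat ->
       (sum1 (fun n => fX (Nat.iter n That x) * a n) (N (jt t)) / INR (N (jt t))
          >= theta * tau (N (jt t)))%R) /\
    (exists c : R, (0 < c)%R /\ forall M : nat, exists N' : nat, (M < N')%nat /\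
       ((sum1 (fun n => fX (Nat.iter n That x) * a n) N' / INR N') / tau N' >= c)%R).
Proof.
  destruct (exists_good_class_subsequence tau q a N theta Htau_mono Hq1 Hq_inc Hq_i Hq_ii
              Ha HN Htheta Hlim) as (i & jt & kk & P & Hi & Hjt & Hkk & Hgood).
  destruct (glue_values kk P (qq q i) (fun s => Nat.lt_le_incl _ _ (proj1 (proj2 (Hgood s))))
              (strictly_increasing_inj kk Hkk)) as [p [Hp_le Hp]].
  set (F := fun M => (sum1 (fun n => fX (Nat.iter n That (point q i p a)) * a n) M / INR M)%R).
  assert (HF : forall s, (F (N (jt s)) >= theta * tau (N (jt s)))%R).
  { intros s. destruct (Hgood s) as [HN1 [_ HP]]. unfold F. rewrite point_sum by exact Hi.
    apply Rdiv_ge_of_mul_ge; [apply lt_0_INR; lia|].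
    rewrite Rmult_assoc, (Rmult_comm (tau _)), <- Rmult_assoc.
    apply HP; [intros k _; apply Hp_le|apply Hp]. }
  exists jt, (point q i p a).
  split; [exact Hjt|].
  split; [apply point_inX; [exact (growing_all q Hq1 Hq_inc Hq_i)|exact Hi|intros k _; apply Hp_le]|].
  split; [exists 0%nat; intros t _; apply HF|].
  apply (frequently_ratio_ge F tau N jt theta Htheta Hjt HN); [|exact HF].
  intros s. apply Htau_pos, (proj1 (Hgood s)).
Qed.
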